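(* Let $\mathbf b^{(1)}=(b_5^{-1},b_6^{-1},b_7^{-1},b_8^{-1},b_1^{-1},b_2^{-1},b_3^{-1},b_4^{-1})$. Then, as identities of formal series in $t$ whose coefficients are Laurent series in $\phi$, $$f^{0,+}(t,\phi;\Lambda,\mathbf b)\,f^{0,+}\!\Big(t,\frac1{t\phi};\frac1\Lambda,\mathbf b^{(1)}\Big)=t,\qquad g^{0,+}(t,\phi;\Lambda,\mathbf b)\,g^{0,+}\!\Big(t,\frac1{t\phi};\frac1\Lambda,\mathbf b^{(1)}\Big)=t,$$ where $f^{0,+}(t,\psi;\Lambda',\mathbf b')=\sum_{n\ge1}\sum_{i\le n}F^{0,+}_{n,i}(\Lambda',\mathbf b')\psi^it^n$ (similarly for $g^{0,+}$), and the substitution $\psi=1/(t\phi)$ is made termwise (the coefficient of each $t^m$ is then a Laurent series in $\phi$ with exponents $\le m-1$).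
   Context: Parameters $\mathbf b=(b_1,\dots,b_8)\in(\mathbb C^* )^8$, $q=\frac{b_1b_2b_3b_4}{b_5b_6b_7b_8}$ (note $q(\mathbf b^{(1)})=q(\mathbf b)$). The equation $q$-$P(A_1)$ for $f=f(t)$, $g=g(t)$ is $$(gf-t^2)(g\bar f-qt^2)(g-b_5)(g-b_6)(g-b_7)(g-b_8)=(gf-1)(g\bar f-1)(g-b_1t)(g-b_2t)(g-b_3t)(g-b_4t),$$ $$(g\bar f-qt^2)(\bar g\bar f-q^2t^2)(\bar f-b_5^{-1})(\bar f-b_6^{-1})(\bar f-b_7^{-1})(\bar f-b_8^{-1})=(g\bar f-1)(\bar g\bar f-1)(\bar f-b_1^{-1}qt)(\bar f-b_2^{-1}qt)(\bar f-b_3^{-1}qt)(\bar f-b_4^{-1}qt).$$ Formal setting: $\Lambda,\phi$ are indeterminates, $\lambda=\Lambda^2/(b_1b_2b_3b_4)$; formal solutions are pairs $f=\sum_{n\ge1}\sum_{i\le n}F_{n,i}\phi^it^n$, $g=\sum_{n\ge1}\sum_{i\le n}G_{n,i}\phi^it^n$ with coefficients rational in $(\Lambda,\mathbf b)$ satisfying both equations identically under the shift $t\mapsto qt$, $\phi\mapsto\lambda\phi$, $\Lambda\mapsto\Lambda$. $(f^{0,+}(t,\phi;\Lambda,\mathbf b),g^{0,+}(t,\phi;\Lambda,\mathbf b))$ denotes the unique such solution with $F_{1,1}=1$, $G_{1,1}=\Lambda$, with coefficients $F^{0,+}_{n,i}(\Lambda,\mathbf b),G^{0,+}_{n,i}(\Lambda,\mathbf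 b)$. *)

From HB Require Import structures.
From mathcomp Require Import all_boot all_order all_algebra.
Set Implicit Arguments. Unset Strict Implicit. Unset Printing Implicit Defensive.
Import Order.TTheory GRing.Theory Num.Theory.
Local Open Scope ring_scope.

(* The coefficient field Q(Lambda, b_1, ..., b_8) of rational functions *)
(* in 9 indeterminates, built as the fraction field of a 9-fold        *)
(* iterated polynomial ring over Q.                                    *)
Fixpoint mpoly (n : nat) : idomainType :=
  match n with
  | 0 => rat
  | m.+1 => ({poly mpoly m} : idomainType)
  end.

Fixpoint mvar (n k : nat) {struct n} : mpoly n :=
  match n return mpoly n with
  | 0 => 0
  | m.+1 => if k is k'.+1 then ((mvar m k')%:P : {poly mpoly m}) else ('X : {poly mpoly m})
  end.

Definition Kgen : fieldType := {fraction (mpoly 9)}.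
Definition tofracK (x : mpoly 9) : Kgen := FracField.tofrac x.

Definition Lgen : Kgen := tofracK (mvar 9 0).
Definition bgen (i : 'I_8) : Kgen := tofracK (mvar 9 i.+1).

(* Parameters.  b : 'I_8 -> K, with b i standing for b_(i+1).           *)
Section Params.
Variable K : fieldType.

Definition qpar (b : 'I_8 -> K) : K :=
  (b (inord 0) * b (inord 1) * b (inord 2) * b (inord 3)) /
  (b (inord 4) * b (inord 5) * b (inord 6) * b (inord 7)).

Definition lampar (L : K) (b : 'I_8 -> K) : K :=
  L ^+ 2 / (b (inord 0) * b (inord 1) * b (inord 2) * b (inord 3)).

Definition bdual (b : 'I_8 -> K) : 'I_8 -> K :=
  fun i => (b (inord ((i + 4) %% 8)))^-1.

(* Formal series  sum_{n >= 0} sum_{i : int} A n i phi^i t^n  whose      *)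
(* coefficient of t^n is a Laurent series in phi with exponents <= n.  *)
(* A series is represented by its coefficient array A n i (t^n phi^i). *)
Definition ser := nat -> int -> K.

Definition supp_ok (A : ser) : Prop := forall (n : nat) (i : int), n%:Z < i -> A n i = 0.

Definition smon (c : K) (k : nat) : ser :=
  fun n i => if (n == k) && (i == 0) then c else 0.

Definition sadd (A B : ser) : ser := fun n i => A n i + B n i.
Definition ssub (A B : ser) : ser := fun n i => A n i - B n i.

(* Cauchy product; for series with A n i = 0 when i > n the defining    *)
(* double sum  sum_{n+m=k} sum_i A n i B m (j-i)  has only the terms     *)
(* i = n - e, 0 <= e <= k - j, listed here.                              *)
Definition smul (A B : ser) : ser := fun k j =>
  if k%:Z < j then 0 else
  \sum_(n < k.+1) \sum_(e < (absz (k%:Z - j)).+1)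
     A n (n%:Z - e%:Z) * B (k - n)%N (j - n%:Z + e%:Z).

(* the shift  t -> q t, phi -> lambda phi *)
Definition sshift (q lam : K) (A : ser) : ser :=
  fun n i => q ^+ n * lam ^ i * A n i.

(* termwise substitution  phi -> 1/(t phi):                               *)
(* A n i phi^i t^n  |->  A n i phi^(-i) t^(n-i);                           *)
(* so the coefficient of t^m phi^j is A (m - j) (- j)  (0 if j > m).      *)
Definition sinv (A : ser) : ser := fun m j =>
  if m%:Z < j then 0 else A (absz (m%:Z - j)) (- j).

Definition tser : ser := smon 1 1.

Definition qPA1 (L : K) (b : 'I_8 -> K) (f g : ser) : Prop :=
  let q := qpar b in
  let lam := lampar L b in
  let fb := sshift q lam f in
  let gb := sshift q lam g in
  let c := fun x : K => smon x 0 in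
  let B := fun k : nat => b (inord k) in
  smul (ssub (smul g f) (smon 1 2))
  (smul (ssub (smul g fb) (smon q 2))
  (smul (ssub g (c (B 4)))
  (smul (ssub g (c (B 5)))
  (smul (ssub g (c (B 6)))
        (ssub g (c (B 7)))))))
  =
  smul (ssub (smul g f) (c 1))
  (smul (ssub (smul g fb) (c 1))
  (smul (ssub g (smon (B 0) 1))
  (smul (ssub g (smon (B 1) 1))
  (smul (ssub g (smon (B 2) 1))
        (ssub g (smon (B 3) 1))))))
  /\
  smul (ssub (smul g fb) (smon q 2))
  (smul (ssub (smul gb fb) (smon (q ^+ 2) 2))
  (smul (ssub fb (c (B 4)^-1))
  (smul (ssub fb (c (B 5)^-1))
  (smul (ssub fb (c (B 6)^-1))
        (ssub fb (c (B 7)^-1))))))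
  =
  smul (ssub (smul g fb) (c 1))
  (smul (ssub (smul gb fb) (c 1))
  (smul (ssub fb (smon ((B 0)^-1 * q) 1))
  (smul (ssub fb (smon ((B 1)^-1 * q) 1))
  (smul (ssub fb (smon ((B 2)^-1 * q) 1))
        (ssub fb (smon ((B 3)^-1 * q) 1)))))).

Definition formal_sol (L : K) (b : 'I_8 -> K) (F G : ser) : Prop :=
  (forall i, F 0%N i = 0) /\ supp_ok F /\
  (forall i, G 0%N i = 0) /\ supp_ok G /\
  qPA1 L b F G.

(* this is the (unique) solution (f^{0,+}, g^{0,+}).                   *)
Definition is_f0plus (L : K) (b : 'I_8 -> K) (F G : ser) : Prop :=
  formal_sol L b F G /\ F 1%N 1 = 1 /\ G 1%N 1 = L.

End Params.

(* Put A = t phi and B = 1/phi. A series sum F_{n,i} phi^i t^n with i <= n is then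
   a power series in A and B, the shift (t, phi) -> (q t, lam phi) multiplies
   A^n B^w by q^n lam^(n-w), and the substitution phi -> 1/(t phi) exchanges A and
   B. The dual solution, after this exchange, reads (B u, B u') with u and u'
   invertible, and (A u^-1, A u'^-1) solves the original system: each factor of
   the original equations is a unit multiple of a factor of the dual ones. It has
   the same initial terms as (f^{0,+}, g^{0,+}). Solutions with given initial terms
   are unique when q^n lam^(n-w) <> q lam for every monomial A^n B^w other than A:
   at the first coefficient where two solutions differ, the equations linearise to
   a 2x2 system of determinant b5 b6 b7 b8 (q lam - q^n lam^(n-w))^2. For generic
   parameters this holds by comparing degrees in Lambda and b1. Hence
   f^{0,+} = A u^-1, while the dual f^{0,+} is B u, and the product is A B = t. *)

From HB Require Import structures.
From mathcomp Require Import all_boot all_order all_algebra.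
From mathcomp Require Import boolp.
From mathcomp Require Import ring zify.
Set Implicit Arguments. Unset Strict Implicit. Unset Printing Implicit Defensive.
Import Order.TTheory GRing.Theory Num.Theory.
Local Open Scope ring_scope.

Section PowerSeries.
Variable R : comNzRingType.

Definition fps := nat -> R.
HB.instance Definition _ := gen_eqMixin fps.
HB.instance Definition _ := gen_choiceMixin fps.

Definition fps_add (a b : fps) : fps := fun k => a k + b k.
Definition fps_opp (a : fps) : fps := fun k => - a k.
Definition fps_zero : fps := fun _ => 0.
Definition fps_one : fps := fun k => (k == 0)%:R.
Definition fps_mul (a b : fps) : fps := fun k => \sum_(i < k.+1) a i * b (k - i)%N.

Fact fps_addA : associative fps_add.
Proof. by move=> a b c; apply/funext=> k; rewrite /fps_add addrA. Qed.
Fact fps_addC : commutative fps_add.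
Proof. by move=> a b; apply/funext=> k; rewrite /fps_add addrC. Qed.
Fact fps_add0 : left_id fps_zero fps_add.
Proof. by move=> a; apply/funext=> k; rewrite /fps_add add0r. Qed.
Fact fps_addN : left_inverse fps_zero fps_opp fps_add.
Proof. by move=> a; apply/funext=> k; rewrite /fps_add /fps_opp addNr. Qed.
HB.instance Definition _ := GRing.isZmodule.Build fps fps_addA fps_addC fps_add0 fps_addN.

Lemma fps_mul_rev a b k : fps_mul a b k = \sum_(i < k.+1) a (k - i)%N * b i.
Proof.
rewrite /fps_mul (reindex_inj rev_ord_inj) /=.
by apply: eq_bigr => j _; rewrite (sub_ordK j).
Qed.

Fact fps_mulA : associative fps_mul.
Proof.
move=> a b c; apply/funext=> k; rewrite {1}/fps_mul fps_mul_rev.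
pose t i j := a i * (b (k - i - j)%N * c j).
transitivity (\sum_(i < k.+1) \sum_(j < k.+1 | (j <= k - i)%N) t i j).
  apply: eq_bigr => /= i _; rewrite fps_mul_rev big_distrr /=.
  by rewrite (big_ord_narrow_leq (leq_subr _ _)).
rewrite (exchange_big_dep predT) //=; apply: eq_bigr => j _.
transitivity (\sum_(i < k.+1 | (i <= k - j)%N) t i j).
  by apply: eq_bigl => i; move: (ltn_ord i) (ltn_ord j); lia.
rewrite (big_ord_narrow_leq (leq_subr _ _)) /fps_mul big_distrl /=.
by apply: eq_bigr => i _; rewrite /t -!subnDA addnC mulrA.
Qed.

Fact fps_mulC : commutative fps_mul.
Proof.
move=> a b; apply/funext=> k; rewrite fps_mul_rev /fps_mul.
by apply: eq_bigr => i _; rewrite mulrC.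
Qed.

Fact fps_mul1 : left_id fps_one fps_mul.
Proof.
move=> a; apply/funext=> k; rewrite /fps_mul big_ord_recl subn0 /fps_one /= mul1r.
by rewrite big1 ?addr0 // => i _; rewrite mul0r.
Qed.

Fact fps_mulDl : left_distributive fps_mul fps_add.
Proof.
move=> a b c; apply/funext=> k; rewrite /fps_mul /fps_add -big_split /=.
by apply: eq_bigr => i _; rewrite mulrDl.
Qed.

Fact fps_one_neq0 : fps_one != 0.
Proof. by apply/eqP => /(congr1 (fun a : fps => a 0%N)) /eqP; rewrite oner_eq0. Qed.

HB.instance Definition _ :=
  GRing.Zmodule_isComNzRing.Build fps fps_mulA fps_mulC fps_mul1 fps_mulDl fps_one_neq0.

Lemma fps_zeroE k : (0 : fps) k = 0.
Proof. by []. Qed.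
Lemma fps_addE (a b : fps) k : (a + b) k = a k + b k.
Proof. by []. Qed.
Lemma fps_oppE (a : fps) k : (- a) k = - a k.
Proof. by []. Qed.
Lemma fps_mulE (a b : fps) k : (a * b) k = \sum_(i < k.+1) a i * b (k - i)%N.
Proof. by []. Qed.
Lemma fps_mulE_rev (a b : fps) k : (a * b) k = \sum_(i < k.+1) a (k - i)%N * b i.
Proof. exact: fps_mul_rev. Qed.
Lemma fps_oneE k : (1 : fps) k = (k == 0)%:R.
Proof. by []. Qed.
Lemma fps_sumE (I : Type) (r : seq I) (P : pred I) (F : I -> fps) k :
  (\sum_(i <- r | P i) F i) k = \sum_(i <- r | P i) F i k.
Proof. by elim/big_rec2: _ => // i y1 y2 _ <-. Qed.

Section Inverse.
Variables (a : fps) (c : R).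
Hypothesis a0c : a 0%N * c = 1.

(* The coefficient of degree k of the inverse is solved from the coefficient
   of degree k of [a * inverse = 1]. *)
Fixpoint inv_coefs (k : nat) : seq R :=
  if k is k'.+1 then
    let s := inv_coefs k' in rcons s (- c * \sum_(j < k) a (k - j)%N * nth 0 s j)
  else [:: c].

Lemma size_inv_coefs k : size (inv_coefs k) = k.+1.
Proof. by elim: k => //= k IH; rewrite size_rcons IH. Qed.

Lemma nth_inv_coefs k j : (j <= k)%N -> nth 0 (inv_coefs k) j = nth 0 (inv_coefs j) j.
Proof.
elim: k => [|k IH]; first by rewrite leqn0 => /eqP->.
rewrite leq_eqVlt => /orP[/eqP->//|]; rewrite ltnS => hj.
by rewrite /= nth_rcons size_inv_coefs ltnS hj IH.
Qed.

Definition fps_inv : fps := fun k => nth 0 (inv_coefs k) k.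

Lemma fps_mulV : a * fps_inv = 1.
Proof.
apply/funext=> k; rewrite fps_mulE_rev fps_oneE big_ord_recr /= subnn.
case: k => [|k]; first by rewrite big_ord0 add0r /fps_inv /= a0c.
rewrite /fps_inv /= nth_rcons size_inv_coefs ltnn eqxx mulrA mulrN a0c mulN1r.
rewrite [X in X + _](_ : _ = \sum_(j < k.+1) a (k.+1 - j)%N * nth 0 (inv_coefs k) j).
  by rewrite addrC addNr.
by apply: eq_bigr => j _; rewrite /fps_inv nth_inv_coefs // -ltnS.
Qed.
End Inverse.

Lemma fps_invertible (a : fps) (c : R) : a 0%N * c = 1 -> exists b, a * b = 1.
Proof. by move=> h; exists (fps_inv a c); apply: fps_mulV. Qed.

Definition fps_lead (a : fps) n c := (forall k, (k < n)%N -> a k = 0) /\ a n = c.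

Lemma fps_leadM a b n m c d :
  fps_lead a n c -> fps_lead b m d -> fps_lead (a * b) (n + m) (c * d).
Proof.
move=> [a0 <-] [b0 <-]; split=> [k hk|].
  rewrite fps_mulE big1 // => i _; have [hi|hi] := ltnP i n; first by rewrite a0 ?mul0r.
  by rewrite b0 ?mulr0 //; move: (ltn_ord i) hk hi; lia.
have hn : (n < (n + m).+1)%N by lia.
rewrite fps_mulE (bigD1 (Ordinal hn)) //= addKn big1 ?addr0 // => i ni.
have {ni} ni : nat_of_ord i != n by apply: contra ni => /eqP ni; apply/eqP/val_inj.
have [lt_in|le_ni] := ltnP i n; first by rewrite a0 ?mul0r.
by rewrite b0 ?mulr0 //; move: (ltn_ord i) ni le_ni; lia.
Qed.

Lemma fps_leadD_eq a b n c d : fps_lead a n c -> fps_lead b n d -> fps_lead (a + b) n (c + d).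
Proof. by move=> [a0 <-] [b0 <-]; split=> // k hk; rewrite fps_addE a0 ?b0 ?addr0. Qed.

Lemma fps_lead_up a n m c : fps_lead a n c -> (m < n)%N -> fps_lead a m 0.
Proof. by move=> [a0 _] mn; split=> [k km|]; apply: a0; lia. Qed.

Lemma fps_leadD_lt a b n m c d :
  fps_lead a n c -> fps_lead b m d -> (n < m)%N -> fps_lead (a + b) n c.
Proof. by move=> ha hb nm; rewrite -[c]addr0; apply: fps_leadD_eq ha (fps_lead_up hb nm). Qed.

Lemma fps_leadD_gt a b n m c d :
  fps_lead a n c -> fps_lead b m d -> (m < n)%N -> fps_lead (a + b) m d.
Proof. by move=> ha hb mn; rewrite -[d]add0r; apply: fps_leadD_eq (fps_lead_up ha mn) hb. Qed.

Lemma fps_leadN a n c : fps_lead a n c -> fps_lead (- a) n (- c).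
Proof. by move=> [a0 <-]; split=> // k hk; rewrite fps_oppE a0 ?oppr0. Qed.

End PowerSeries.

Section Bivariate.
Variable K : fieldType.
Local Notation bps := (fps (fps K)).

Lemma bps_mulE (X Y : bps) n w :
  (X * Y) n w = \sum_(i < n.+1) \sum_(j < w.+1) X i j * Y (n - i)%N (w - j)%N.
Proof. by rewrite fps_mulE fps_sumE; apply: eq_bigr => i _; rewrite fps_mulE. Qed.

Definition monom (c : K) (n0 w0 : nat) : bps :=
  fun n w => if (n == n0) && (w == w0) then c else 0.

Lemma monom_mulE c n0 w0 (Y : bps) n w :
  (monom c n0 w0 * Y) n w =
  if (n0 <= n)%N && (w0 <= w)%N then c * Y (n - n0)%N (w - w0)%N else 0.
Proof.
rewrite bps_mulE.
transitivity (\sum_(i < n.+1 | i == n0 :> nat)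
                \sum_(j < w.+1 | j == w0 :> nat) c * Y (n - i)%N (w - j)%N).
  rewrite [RHS]big_mkcond; apply: eq_bigr => i _ /=.
  case: (nat_of_ord i =P n0) => hi.
    rewrite [RHS]big_mkcond; apply: eq_bigr => j _ /=.
    by rewrite /monom hi eqxx; case: eqP; rewrite ?mul0r.
  by rewrite big1 // => j _; rewrite /monom; case: (nat_of_ord i =P n0) hi; rewrite ?mul0r.
rewrite (big_ord1_eq _ (fun i => \sum_(j < w.+1 | j == w0 :> nat) c * Y (n - i)%N (w - j)%N)).
rewrite (big_ord1_eq _ (fun j => c * Y (n - n0)%N (w - j)%N)) !ltnS.
by case: (n0 <= n)%N; case: (w0 <= w)%N.
Qed.

Lemma monom_mul c d n1 w1 n2 w2 :
  monom c n1 w1 * monom d n2 w2 = monom (c * d) (n1 + n2) (w1 + w2).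
Proof.
apply/funext=> n; apply/funext=> w; rewrite monom_mulE /monom.
case: (leqP n1 n) => hn; case: (leqP w1 w) => hw /=;
  try by case: ifP => // /andP[/eqP h1 /eqP h2]; lia.
have -> : ((n - n1 == n2) && (w - w1 == w2))%N = ((n == n1 + n2) && (w == w1 + w2))%N.
  by apply/idP/idP; lia.
by case: ifP; rewrite ?mulr0.
Qed.

Lemma monom1 : monom 1 0 0 = 1.
Proof. by apply/funext=> -[|n]; apply/funext=> -[|w]. Qed.

Definition bconst c := monom c 0 0.
Definition varA := monom 1 1 0.
Definition varB := monom 1 0 1.

Lemma bconstM c d : bconst (c * d) = bconst c * bconst d.
Proof. by rewrite /bconst monom_mul. Qed.
Lemma bconst1 : bconst 1 = 1.
Proof. exact: monom1. Qed.
Lemma bconstX c n : bconst (c ^+ n) = bconst c ^+ n.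
Proof. by elim: n => [|n IH]; rewrite ?expr0 ?bconst1 // !exprS bconstM IH. Qed.

Lemma monom_diag c k : monom c k k = bconst c * (varA * varB) ^+ k.
Proof.
elim: k => [|k IH]; first by rewrite expr0 mulr1.
by rewrite exprS mulrCA -IH /varA /varB !monom_mul !mul1r; congr monom; lia.
Qed.
Lemma monom_diagM c d k : monom (c * d) k k = bconst c * bconst d * (varA * varB) ^+ k.
Proof. by rewrite monom_diag bconstM. Qed.
Lemma monom_varA c : monom c 1 0 = bconst c * varA.
Proof. by rewrite /bconst /varA monom_mul mulr1. Qed.
Lemma monom_varB c : monom c 0 1 = bconst c * varB.
Proof. by rewrite /bconst /varB monom_mul mulr1. Qed.

Lemma varA_mulE (X : bps) n w : (varA * X) n w = if n is n'.+1 then X n' w else 0.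
Proof. by rewrite /varA monom_mulE subn0 mul1r leq0n andbT; case: n => // n; rewrite subn1. Qed.
Lemma varB_mulE (X : bps) n w : (varB * X) n w = if w is w'.+1 then X n w' else 0.
Proof. by rewrite /varB monom_mulE subn0 mul1r leq0n; case: w => // w; rewrite subn1. Qed.

Lemma varB_mulI (X : bps) : varB * X = 0 -> X = 0.
Proof.
by move=> h; apply/funext=> n; apply/funext=> w; have := congr1 (fun Y : bps => Y n w.+1) h;
  rewrite varB_mulE.
Qed.

Lemma varBX_mulI (X : bps) k : varB ^+ k * X = 0 -> X = 0.
Proof. by elim: k => [|k IH]; rewrite ?expr0 ?mul1r // exprS -mulrA => /varB_mulI /IH. Qed.

Lemma varB_divides (X : bps) : (forall n, X n 0%N = 0) -> X = varB * (fun n w => X n w.+1).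
Proof. by move=> h; apply/funext=> n; apply/funext=> -[|w]; rewrite varB_mulE ?h. Qed.

Definition bswap (X : bps) : bps := fun n w => X w n.

Lemma bswapM X Y : bswap (X * Y) = bswap X * bswap Y.
Proof. by apply/funext=> n; apply/funext=> w; rewrite /bswap !bps_mulE exchange_big. Qed.
Lemma bswapB X Y : bswap (X - Y) = bswap X - bswap Y.
Proof. by []. Qed.
Lemma bswap_monom c n w : bswap (monom c n w) = monom c w n.
Proof. by apply/funext=> n'; apply/funext=> w'; rewrite /bswap /monom andbC. Qed.

(* The q-shift t -> q t, phi -> lam phi, with t = A B and phi = 1/B. *)
Definition qshift (q lam : K) (X : bps) : bps :=
  fun n w => q ^+ n * lam ^ (n%:Z - w%:Z) * X n w.

Lemma qshiftM q lam X Y : lam != 0 -> qshift q lam (X * Y) = qshift q lam X * qshift q lam Y.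
Proof.
move=> lam0; apply/funext=> n; apply/funext=> w; rewrite /qshift !bps_mulE big_distrr /=.
apply: eq_bigr => i _; rewrite big_distrr /=; apply: eq_bigr => j _.
have hi := ltn_ord i; have hj := ltn_ord j.
have -> : n%:Z - w%:Z = (i%:Z - j%:Z) + ((n - i)%N%:Z - (w - j)%N%:Z) by lia.
rewrite expfzDr // -{1}(subnK (_ : (i <= n)%N)) 1?addnC ?exprD; last by rewrite -ltnS.
by ring.
Qed.
Lemma qshiftB q lam X Y : qshift q lam (X - Y) = qshift q lam X - qshift q lam Y.
Proof. by apply/funext=> n; apply/funext=> w; rewrite /qshift /= mulrBr. Qed.
Lemma qshift_monom q lam c n w :
  qshift q lam (monom c n w) = monom (q ^+ n * lam ^ (n%:Z - w%:Z) * c) n w.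
Proof.
apply/funext=> n'; apply/funext=> w'; rewrite /qshift /monom.
by case: ifP => [/andP[/eqP -> /eqP ->]|]; rewrite ?mulr0.
Qed.
Lemma qshift1 q lam : qshift q lam 1 = 1.
Proof. by rewrite -monom1 qshift_monom subrr expr0 expr0z !mul1r. Qed.

Lemma bswap_qshift q lam X : q != 0 -> lam != 0 ->
  bswap (qshift q (q * lam)^-1 X) = qshift q lam (bswap X).
Proof.
move=> q0 lam0; apply/funext=> n; apply/funext=> w; rewrite /bswap /qshift.
congr (_ * _); rewrite exprz_inv expfzMl.
rewrite -[q ^+ n]/(q ^ (n%:Z)) -[q ^+ w]/(q ^ (w%:Z)) opprB mulrA -expfzDr //.
by congr (q ^ _ * _); lia.
Qed.

End Bivariate.
Arguments varA {K}.
Arguments varB {K}.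

Section SeriesAsBivariate.
Variable K : fieldType.
Local Notation bps := (fps (fps K)).

(* The monomial phi^i t^n (i <= n) is A^n B^(n - i), with A = t phi and B = 1/phi;
   the substitution phi -> 1/(t phi) then exchanges A and B. *)
Definition bps_of_ser (A : ser K) : bps := fun n w => A n (n%:Z - w%:Z).

Lemma bps_of_smul A B : bps_of_ser (smul A B) = bps_of_ser A * bps_of_ser B.
Proof.
apply/funext=> k; apply/funext=> w; rewrite bps_mulE /bps_of_ser /smul.
have -> : (k%:Z < k%:Z - w%:Z) = false by lia.
have -> : k%:Z - (k%:Z - w%:Z) = w%:Z by lia.
apply: eq_bigr => n _; apply: eq_bigr => e _.
have hn := ltn_ord n; have he : (e <= w)%N by exact: (ltn_ord e).
by congr (_ * B _ _); move: hn he; move: (nat_of_ord n) (nat_of_ord e) => n1 e1; lia.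
Qed.

Lemma bps_of_ssub A B : bps_of_ser (ssub A B) = bps_of_ser A - bps_of_ser B.
Proof. by []. Qed.

Lemma bps_of_smon c k : bps_of_ser (smon c k) = monom c k k.
Proof.
apply/funext=> n; apply/funext=> w; rewrite /bps_of_ser /smon /monom.
have -> : (n%:Z - w%:Z == 0) = (w == n) by apply/idP/idP; lia.
by case: (n =P k) => [->|] //=; rewrite ?andbF.
Qed.

Lemma bps_of_sshift q lam A : bps_of_ser (sshift q lam A) = qshift q lam (bps_of_ser A).
Proof. by []. Qed.

Lemma bps_of_sinv A : bps_of_ser (sinv A) = bswap (bps_of_ser A).
Proof.
apply/funext=> m; apply/funext=> w; rewrite /bps_of_ser /sinv /bswap.
have -> : (m%:Z < m%:Z - w%:Z) = false by lia.
by congr (A _ _); lia.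
Qed.

Lemma bps_of_ser_inj A B : supp_ok A -> supp_ok B -> bps_of_ser A = bps_of_ser B -> A = B.
Proof.
move=> hA hB e; apply/funext=> n; apply/funext=> i.
case: (ltrP n%:Z i) => h; first by rewrite hA // hB.
have := congr1 (fun X : bps => X n (absz (n%:Z - i))) e; rewrite /bps_of_ser.
by have -> : n%:Z - (absz (n%:Z - i))%:Z = i by lia.
Qed.

Lemma supp_smul (A B : ser K) : supp_ok (smul A B).
Proof. by move=> n i h; rewrite /smul h. Qed.

Lemma supp_smon (c : K) k : supp_ok (smon c k).
Proof.
by move=> n i h; rewrite /smon; case: ifP => // /andP[_ /eqP e]; move: h; rewrite e; lia.
Qed.

End SeriesAsBivariate.

Section Equations.
Variable K : fieldType.
Local Notation bps := (fps (fps K)).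
Variables (q : K) (B : nat -> K).

Definition PA1_first (f g sf : bps) :=
  (g * f - monom 1 2 2) * ((g * sf - monom q 2 2) * ((g - monom (B 4%N) 0 0) *
    ((g - monom (B 5%N) 0 0) * ((g - monom (B 6%N) 0 0) * (g - monom (B 7%N) 0 0))))) =
  (g * f - monom 1 0 0) * ((g * sf - monom 1 0 0) * ((g - monom (B 0%N) 1 1) *
    ((g - monom (B 1%N) 1 1) * ((g - monom (B 2%N) 1 1) * (g - monom (B 3%N) 1 1))))).

Definition PA1_second (g sf sg : bps) :=
  (g * sf - monom q 2 2) * ((sg * sf - monom (q ^+ 2) 2 2) * ((sf - monom (B 4%N)^-1 0 0) *
    ((sf - monom (B 5%N)^-1 0 0) * ((sf - monom (B 6%N)^-1 0 0) * (sf - monom (B 7%N)^-1 0 0))))) =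
  (g * sf - monom 1 0 0) * ((sg * sf - monom 1 0 0) * ((sf - monom ((B 0%N)^-1 * q) 1 1) *
    ((sf - monom ((B 1%N)^-1 * q) 1 1) * ((sf - monom ((B 2%N)^-1 * q) 1 1) *
      (sf - monom ((B 3%N)^-1 * q) 1 1))))).

Lemma PA1_first_bswap f g sf :
  PA1_first f g sf -> PA1_first (bswap f) (bswap g) (bswap sf).
Proof. by rewrite /PA1_first => /(congr1 (@bswap K)); rewrite !(bswapM, bswapB, bswap_monom). Qed.

Lemma PA1_second_bswap g sf sg :
  PA1_second g sf sg -> PA1_second (bswap g) (bswap sf) (bswap sg).
Proof. by rewrite /PA1_second => /(congr1 (@bswap K)); rewrite !(bswapM, bswapB, bswap_monom). Qed.

End Equations.

Lemma qPA1_bps (K : fieldType) (L : K) (b : 'I_8 -> K) (F G : ser K) :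
  let q := qpar b in let lam := lampar L b in let B k := b (inord k) in
  let f := bps_of_ser F in let g := bps_of_ser G in
  qPA1 L b F G ->
  PA1_first q B f g (qshift q lam f) /\ PA1_second q B g (qshift q lam f) (qshift q lam g).
Proof.
rewrite /qPA1 /= => -[e1 e2]; split.
  by move: (congr1 (@bps_of_ser K) e1); rewrite !(bps_of_smul, bps_of_ssub, bps_of_smon,
      bps_of_sshift).
by move: (congr1 (@bps_of_ser K) e2); rewrite !(bps_of_smul, bps_of_ssub, bps_of_smon,
    bps_of_sshift).
Qed.

(* With f = A v, ft = B u and u v = 1 (and likewise for g and the shifted
   series), every factor of the first equation is a unit multiple of a factor of
   the dual first equation; T stands for t = A B, r for q lam and li for 1/lam. *)
Lemma dual_first_identity (R : comNzRingType) (A B T f g sf ft gt sft u v u' v' su sv q r li lam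
   b1 b2 b3 b4 b5 b6 b7 b8 ib1 ib2 ib3 ib4 ib5 ib6 ib7 ib8 : R) :
  T = A * B -> f = A * v -> g = A * v' -> sf = r * A * sv -> ft = B * u -> gt = B * u' ->
  sft = li * B * su ->
  u * v = 1 -> u' * v' = 1 -> su * sv = 1 -> q = r * li -> r = lam * q -> lam * li = 1 ->
  b1 * ib1 = 1 -> b2 * ib2 = 1 -> b3 * ib3 = 1 -> b4 * ib4 = 1 ->
  b5 * ib5 = 1 -> b6 * ib6 = 1 -> b7 * ib7 = 1 -> b8 * ib8 = 1 ->
  B ^+ 4 * ((g * f - T ^+ 2) * ((g * sf - q * T ^+ 2) * ((g - b5) * ((g - b6) * ((g - b7) * (g -
      b8)))))
   - (g * f - 1) * ((g * sf - 1) * ((g - b1 * T) * ((g - b2 * T) * ((g - b3 * T) * (g - b4 *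
       T)))))) =
  A ^+ 4 * v * v' ^+ 6 * sv * ((r * b5 * b6 * b7 * b8) *
     ((gt * ft - 1) * ((gt * sft - 1) * ((gt - ib5 * T) * ((gt - ib6 * T) * ((gt - ib7 * T) * (gt
         - ib8 * T))))))
   - (lam * b1 * b2 * b3 * b4) *
     ((gt * ft - T ^+ 2) * ((gt * sft - q * T ^+ 2) * ((gt - ib1) * ((gt - ib2) * ((gt - ib3) *
         (gt - ib4))))))).
Proof.
move=> hT hf hg hsf hft hgt hsft huv hu hsu hq hr hl h1 h2 h3 h4 h5 h6 h7 h8.
have L1 : g * f - T ^+ 2 = A ^+ 2 * v * v' * (1 - gt * ft).
  rewrite [RHS](_ : _ = A ^+ 2 * v * v' - A ^+ 2 * B ^+ 2 * (u * v) * (u' * v')); last by rewrite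
      hgt hft; ring.
  by rewrite huv hu hf hg hT; ring.
have L2 : g * sf - q * T ^+ 2 = r * A ^+ 2 * v' * sv * (1 - gt * sft).
  rewrite [RHS](_ : _ = r * A ^+ 2 * v' * sv - r * li * A ^+ 2 * B ^+ 2 * (u' * v') * (su * sv));
      last by rewrite hgt hsft; ring.
  by rewrite hu hsu hg hsf hT hq; ring.
have L3 b ib : b * ib = 1 -> B * (g - b) = - b * v' * (gt - ib * T).
  move=> hb; rewrite [RHS](_ : _ = - b * B * (u' * v') + (b * ib) * v' * A * B); last by rewrite
      hgt hT; ring.
  by rewrite hb hu hg; ring.
have R1 : B ^+ 2 * (g * f - 1) = - v * v' * (gt * ft - T ^+ 2).
  rewrite [RHS](_ : _ = - B ^+ 2 * (u * v) * (u' * v') + v * v' * A ^+ 2 * B ^+ 2); last by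
      rewrite hgt hft hT; ring.
  by rewrite huv hu hf hg; ring.
have R2 : B ^+ 2 * (g * sf - 1) = - lam * v' * sv * (gt * sft - q * T ^+ 2).
  rewrite [RHS](_ : _ = - (lam * li) * B ^+ 2 * (u' * v') * (su * sv) + (lam * q) * v' * sv * A ^+
      2 * B ^+ 2); last by rewrite hgt hsft hT; ring.
  by rewrite hl hu hsu -hr hg hsf; ring.
have R3 b ib : b * ib = 1 -> g - b * T = - b * A * v' * (gt - ib).
  move=> hb; rewrite [RHS](_ : _ = - b * A * B * (u' * v') + (b * ib) * A * v'); last by rewrite
      hgt; ring.
  by rewrite hb hu hg hT; ring.
have eL : B ^+ 4 * ((g * f - T ^+ 2) * ((g * sf - q * T ^+ 2) * ((g - b5) * ((g - b6) * ((g - b7)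
    * (g - b8)))))) =
   (g * f - T ^+ 2) * (g * sf - q * T ^+ 2) * (B * (g - b5)) * (B * (g - b6)) * (B * (g - b7)) *
       (B * (g - b8)) by ring.
have eR : B ^+ 4 * ((g * f - 1) * ((g * sf - 1) * ((g - b1 * T) * ((g - b2 * T) * ((g - b3 * T) *
    (g - b4 * T)))))) =
   (B ^+ 2 * (g * f - 1)) * (B ^+ 2 * (g * sf - 1)) * (g - b1 * T) * (g - b2 * T) * (g - b3 * T) *
       (g - b4 * T) by ring.
rewrite mulrBr eL eR L1 L2 (L3 _ _ h5) (L3 _ _ h6) (L3 _ _ h7) (L3 _ _ h8) R1 R2 (R3 _ _ h1) (R3 _
    _ h2) (R3 _ _ h3) (R3 _ _ h4).
ring.
Qed.

Lemma dual_second_identity (R : comNzRingType) (A B T g sf sg gt sft sgt v' sv sv' su su' q r li lam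
   b1 b2 b3 b4 b5 b6 b7 b8 ib1 ib2 ib3 ib4 ib5 ib6 ib7 ib8 u' : R) :
  T = A * B -> g = A * v' -> sf = r * A * sv -> sg = r * A * sv' -> gt = B * u' ->
  sft = li * B * su -> sgt = li * B * su' ->
  u' * v' = 1 -> su * sv = 1 -> su' * sv' = 1 -> q = r * li -> r = lam * q -> lam * li = 1 ->
  b1 * ib1 = 1 -> b2 * ib2 = 1 -> b3 * ib3 = 1 -> b4 * ib4 = 1 ->
  b5 * ib5 = 1 -> b6 * ib6 = 1 -> b7 * ib7 = 1 -> b8 * ib8 = 1 ->
  B ^+ 4 * ((g * sf - q * T ^+ 2) * ((sg * sf - q ^+ 2 * T ^+ 2) * ((sf - ib5) * ((sf - ib6) *
      ((sf - ib7) * (sf - ib8)))))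
   - (g * sf - 1) * ((sg * sf - 1) * ((sf - ib1 * q * T) * ((sf - ib2 * q * T) * ((sf - ib3 * q *
       T) * (sf - ib4 * q * T)))))) =
  A ^+ 4 * v' * sv' * sv ^+ 6 * ((r ^+ 3 * lam ^+ 4 * ib5 * ib6 * ib7 * ib8) *
     ((gt * sft - 1) * ((sgt * sft - 1) * ((sft - b5 * q * T) * ((sft - b6 * q * T) * ((sft - b7 *
         q * T) * (sft - b8 * q * T))))))
   - (lam ^+ 3 * r ^+ 4 * ib1 * ib2 * ib3 * ib4) *
     ((gt * sft - q * T ^+ 2) * ((sgt * sft - q ^+ 2 * T ^+ 2) * ((sft - b1) * ((sft - b2) * ((sft
         - b3) * (sft - b4))))))).
Proof.
move=> hT hg hsf hsg hgt hsft hsgt hu hsu hsu' hq hr hl h1 h2 h3 h4 h5 h6 h7 h8.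
have L1 : g * sf - q * T ^+ 2 = r * A ^+ 2 * v' * sv * (1 - gt * sft).
  rewrite [RHS](_ : _ = r * A ^+ 2 * v' * sv - r * li * A ^+ 2 * B ^+ 2 * (u' * v') * (su * sv));
      last by rewrite hgt hsft; ring.
  by rewrite hu hsu hg hsf hT hq; ring.
have L2 : sg * sf - q ^+ 2 * T ^+ 2 = r ^+ 2 * A ^+ 2 * sv' * sv * (1 - sgt * sft).
  rewrite [RHS](_ : _ = r ^+ 2 * A ^+ 2 * sv' * sv - (r * li) ^+ 2 * A ^+ 2 * B ^+ 2 * (su' * sv')
      * (su * sv)); last by rewrite hsgt hsft; ring.
  by rewrite hsu' hsu hsg hsf hT hq; ring.
have L3 b ib : b * ib = 1 -> B * (sf - ib) = - lam * ib * sv * (sft - b * q * T).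
  move=> hb; rewrite [RHS](_ : _ = - (lam * li) * ib * B * (su * sv) + (lam * q) * (b * ib) * sv *
      A * B); last by rewrite hsft hT; ring.
  by rewrite hb hl hsu -hr hsf; ring.
have R1 : B ^+ 2 * (g * sf - 1) = - lam * v' * sv * (gt * sft - q * T ^+ 2).
  rewrite [RHS](_ : _ = - (lam * li) * B ^+ 2 * (u' * v') * (su * sv) + (lam * q) * v' * sv * A ^+
      2 * B ^+ 2); last by rewrite hgt hsft hT; ring.
  by rewrite hl hu hsu -hr hg hsf; ring.
have R2 : B ^+ 2 * (sg * sf - 1) = - lam ^+ 2 * sv' * sv * (sgt * sft - q ^+ 2 * T ^+ 2).
  rewrite [RHS](_ : _ = - (lam * li) ^+ 2 * B ^+ 2 * (su' * sv') * (su * sv) + (lam * q) ^+ 2 *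
      sv' * sv * A ^+ 2 * B ^+ 2); last by rewrite hsgt hsft hT; ring.
  by rewrite hl hsu' hsu -hr hsg hsf; ring.
have R3 b ib : b * ib = 1 -> sf - ib * q * T = - r * ib * A * sv * (sft - b).
  move=> hb; rewrite [RHS](_ : _ = - (r * li) * ib * A * B * (su * sv) + r * (b * ib) * A * sv);
      last by rewrite hsft; ring.
  by rewrite hb hsu -hq hsf hT; ring.
have eL : B ^+ 4 * ((g * sf - q * T ^+ 2) * ((sg * sf - q ^+ 2 * T ^+ 2) * ((sf - ib5) * ((sf -
    ib6) * ((sf - ib7) * (sf - ib8)))))) =
   (g * sf - q * T ^+ 2) * (sg * sf - q ^+ 2 * T ^+ 2) * (B * (sf - ib5)) * (B * (sf - ib6)) * (B
       * (sf - ib7)) * (B * (sf - ib8)) by ring.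
have eR : B ^+ 4 * ((g * sf - 1) * ((sg * sf - 1) * ((sf - ib1 * q * T) * ((sf - ib2 * q * T) *
    ((sf - ib3 * q * T) * (sf - ib4 * q * T)))))) =
   (B ^+ 2 * (g * sf - 1)) * (B ^+ 2 * (sg * sf - 1)) * (sf - ib1 * q * T) * (sf - ib2 * q * T) *
       (sf - ib3 * q * T) * (sf - ib4 * q * T) by ring.
have h5' : ib5 * b5 = 1 by rewrite mulrC. have h6' : ib6 * b6 = 1 by rewrite mulrC.
have h7' : ib7 * b7 = 1 by rewrite mulrC. have h8' : ib8 * b8 = 1 by rewrite mulrC.
rewrite mulrBr eL eR L1 L2 (L3 _ _ h5) (L3 _ _ h6) (L3 _ _ h7) (L3 _ _ h8) R1 R2 (R3 _ _ h1) (R3 _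
    _ h2) (R3 _ _ h3) (R3 _ _ h4).
ring.
Qed.

Section Duality.
Variable K : fieldType.
Local Notation bps := (fps (fps K)).
Variables (L : K) (b : 'I_8 -> K).
Hypothesis L_neq0 : L != 0.
Hypothesis b_neq0 : forall i, b i != 0.
Local Notation q := (qpar b).
Local Notation lam := (lampar L b).
Local Notation B := (fun k : nat => b (inord k)).
Local Notation B' := (fun k : nat => bdual b (inord k)).

Lemma bdual_low :
  [/\ B' 0%N = (B 4%N)^-1, B' 1%N = (B 5%N)^-1, B' 2%N = (B 6%N)^-1 & B' 3%N = (B 7%N)^-1].
Proof. by split; rewrite /bdual inordK. Qed.

Lemma bdual_high :
  [/\ B' 4%N = (B 0%N)^-1, B' 5%N = (B 1%N)^-1, B' 6%N = (B 2%N)^-1 & B' 7%N = (B 3%N)^-1].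
Proof. by split; rewrite /bdual inordK. Qed.

Lemma qpar_neq0 : q != 0.
Proof. by rewrite /qpar !(mulf_eq0, invr_eq0, negbTE (b_neq0 _)). Qed.

Lemma lampar_neq0 : lam != 0.
Proof.
by rewrite /lampar !(mulf_eq0, invr_eq0, expf_eq0, negbTE (b_neq0 _), negbTE L_neq0, andbF).
Qed.

Lemma qpar_bdual : qpar (bdual b) = q.
Proof.
rewrite /qpar; case: bdual_low bdual_high => -> -> -> -> [-> -> -> ->].
by field; rewrite !b_neq0 oner_neq0.
Qed.

Lemma lampar_bdual : lampar L^-1 (bdual b) = (q * lam)^-1.
Proof.
rewrite /lampar /qpar; case: bdual_low => -> -> -> ->.
by field; rewrite !b_neq0 L_neq0 oner_neq0.
Qed.

Lemma qshift_varA (X : bps) : qshift q lam (varA * X) = bconst (q * lam) * varA * qshift q lam X.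
Proof.
rewrite qshiftM ?lampar_neq0 // /varA qshift_monom monom_varA.
by rewrite expr1 subr0 expr1z mulr1.
Qed.

Lemma qshift_varB (X : bps) : qshift q lam (varB * X) = bconst lam^-1 * varB * qshift q lam X.
Proof.
rewrite qshiftM ?lampar_neq0 // /varB qshift_monom monom_varB.
by rewrite expr0 mul1r mulr1 sub0r -exprnN expr1.
Qed.

Lemma qshift_mul_eq1 (u v : bps) : u * v = 1 -> qshift q lam u * qshift q lam v = 1.
Proof. by move=> uv; rewrite -qshiftM ?lampar_neq0 // uv qshift1. Qed.

Lemma bconst_mulV k : bconst (B k) * bconst (B k)^-1 = 1.
Proof. by rewrite -bconstM mulfV ?bconst1. Qed.

Lemma bconst_q_split : bconst q = bconst (q * lam) * bconst lam^-1.
Proof. by rewrite -bconstM -mulrA mulfV ?mulr1 ?lampar_neq0. Qed.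
Lemma bconst_qlam : bconst (q * lam) = bconst lam * bconst q.
Proof. by rewrite -bconstM mulrC. Qed.
Lemma bconst_lamV : bconst lam * bconst lam^-1 = 1.
Proof. by rewrite -bconstM mulfV ?bconst1 ?lampar_neq0. Qed.

Section DualSolution.
Variables (u v u' v' : bps).
Hypotheses (uv : u * v = 1) (uv' : u' * v' = 1).

Let su := qshift q lam u.
Let sv := qshift q lam v.
Let su' := qshift q lam u'.
Let sv' := qshift q lam v'.
Let suv : su * sv = 1 := qshift_mul_eq1 uv.
Let suv' : su' * sv' = 1 := qshift_mul_eq1 uv'.

Lemma PA1_first_of_dual :
  PA1_first q B' (varB * u) (varB * u') (qshift q lam (varB * u)) ->
  PA1_first q B (varA * v) (varA * v') (qshift q lam (varA * v)).
Proof.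
move=> D1.
have hsf := qshift_varA v; have hsft := qshift_varB u.
have hq := bconst_q_split; have hr := bconst_qlam; have hl := bconst_lamV.
rewrite /PA1_first !monom_diag bconst1 !mul1r !expr0 !mulr1 !expr1.
apply/eqP; rewrite -subr_eq0; apply/eqP; apply: (@varBX_mulI _ _ 4).
rewrite (@dual_first_identity _ varA varB (varA * varB) (varA * v) (varA * v')
   (qshift q lam (varA * v)) (varB * u) (varB * u') (qshift q lam (varB * u))
   u v u' v' su sv (bconst q) (bconst (q * lam)) (bconst lam^-1) (bconst lam)
   (bconst (B 0%N)) (bconst (B 1%N)) (bconst (B 2%N)) (bconst (B 3%N))
   (bconst (B 4%N)) (bconst (B 5%N)) (bconst (B 6%N)) (bconst (B 7%N))
   (bconst (B 0%N)^-1) (bconst (B 1%N)^-1) (bconst (B 2%N)^-1) (bconst (B 3%N)^-1)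
   (bconst (B 4%N)^-1) (bconst (B 5%N)^-1) (bconst (B 6%N)^-1) (bconst (B 7%N)^-1))
   ?bconst_mulV //.
move: D1; rewrite /PA1_first; case: bdual_low bdual_high => -> -> -> -> [-> -> -> ->].
rewrite !monom_diag bconst1 !mul1r !expr0 !mulr1 !expr1 => ->.
rewrite -!bconstM
  (_ : q * lam * B 4%N * B 5%N * B 6%N * B 7%N = lam * B 0%N * B 1%N * B 2%N * B 3%N).
  by rewrite subrr mulr0.
by rewrite /qpar /lampar; field; rewrite !b_neq0 ?oner_neq0.
Qed.

Lemma PA1_second_of_dual :
  PA1_second q B' (varB * u') (qshift q lam (varB * u)) (qshift q lam (varB * u')) ->
  PA1_second q B (varA * v') (qshift q lam (varA * v)) (qshift q lam (varA * v')).
Proof.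
move=> D2.
have hsf := qshift_varA v; have hsg := qshift_varA v'.
have hsft := qshift_varB u; have hsgt := qshift_varB u'.
have hq := bconst_q_split; have hr := bconst_qlam; have hl := bconst_lamV.
rewrite /PA1_second !(monom_diagM (B _)^-1) !monom_diag bconstX bconst1 !mul1r !expr0 !mulr1 !expr1.
apply/eqP; rewrite -subr_eq0; apply/eqP; apply: (@varBX_mulI _ _ 4).
rewrite (@dual_second_identity _ varA varB (varA * varB) (varA * v')
   (qshift q lam (varA * v)) (qshift q lam (varA * v')) (varB * u')
   (qshift q lam (varB * u)) (qshift q lam (varB * u'))
   v' sv sv' su su' (bconst q) (bconst (q * lam)) (bconst lam^-1) (bconst lam)
   (bconst (B 0%N)) (bconst (B 1%N)) (bconst (B 2%N)) (bconst (B 3%N))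
   (bconst (B 4%N)) (bconst (B 5%N)) (bconst (B 6%N)) (bconst (B 7%N))
   (bconst (B 0%N)^-1) (bconst (B 1%N)^-1) (bconst (B 2%N)^-1) (bconst (B 3%N)^-1)
   (bconst (B 4%N)^-1) (bconst (B 5%N)^-1) (bconst (B 6%N)^-1) (bconst (B 7%N)^-1) u')
   ?bconst_mulV //.
move: D2; rewrite /PA1_second; case: bdual_low bdual_high => -> -> -> -> [-> -> -> ->].
rewrite !invrK.
rewrite !(monom_diagM (B _)) !monom_diag bconstX bconst1 !mul1r !expr0 !mulr1 !expr1 => ->.
rewrite -!bconstX -!bconstM.
rewrite (_ : (q * lam) ^+ 3 * lam ^+ 4 * (B 4%N)^-1 * (B 5%N)^-1 * (B 6%N)^-1 * (B 7%N)^-1 =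
             lam ^+ 3 * (q * lam) ^+ 4 * (B 0%N)^-1 * (B 1%N)^-1 * (B 2%N)^-1 * (B 3%N)^-1).
  by rewrite subrr mulr0.
by rewrite /qpar /lampar; field; rewrite !b_neq0 ?oner_neq0.
Qed.

End DualSolution.
End Duality.

Section LeadingTerms.
Variable K : fieldType.
Local Notation bps := (fps (fps K)).

Definition slice0 (X : bps) : fps K := fun n => X n 0%N.

Lemma slice0M X Y : slice0 (X * Y) = slice0 X * slice0 Y.
Proof.
by apply/funext=> n; rewrite /slice0 bps_mulE fps_mulE; apply: eq_bigr => i _; rewrite big_ord1.
Qed.

Definition lead0 (X : bps) n c := fps_lead (slice0 X) n c.

Lemma lead0M X Y n m k c d : lead0 X n c -> lead0 Y m d -> (n + m)%N = k -> lead0 (X * Y) k (c * d).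
Proof. by move=> hX hY <-; rewrite /lead0 slice0M; apply: fps_leadM. Qed.
Lemma lead0D_eq X Y n c d : lead0 X n c -> lead0 Y n d -> lead0 (X + Y) n (c + d).
Proof. exact: fps_leadD_eq. Qed.
Lemma lead0D_lt X Y n m c d : lead0 X n c -> lead0 Y m d -> (n < m)%N -> lead0 (X + Y) n c.
Proof. exact: fps_leadD_lt. Qed.
Lemma lead0D_gt X Y n m c d : lead0 X n c -> lead0 Y m d -> (m < n)%N -> lead0 (X + Y) m d.
Proof. exact: fps_leadD_gt. Qed.
Lemma lead0N X n c : lead0 X n c -> lead0 (- X) n (- c).
Proof. exact: fps_leadN. Qed.
Lemma lead0_const c : lead0 (monom c 0 0) 0 c.
Proof. by split=> // k; rewrite ltn0. Qed.
Lemma lead0_monom_diag c k n : (0 < k)%N -> lead0 (monom c k k) n 0.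
Proof. by move=> k0; split=> [m _|]; rewrite /slice0 /monom (ltn_eqF k0) andbF. Qed.

Lemma lead0_qshift q lam X n c : lead0 X n c -> lead0 (qshift q lam X) n (q ^+ n * lam ^+ n * c).
Proof.
move=> [X0 <-]; split=> [k /X0 Xk0|]; rewrite /slice0 /qshift.
  by rewrite [X k 0%N]Xk0 mulr0.
by rewrite subr0.
Qed.

Definition vanish_below (X : bps) w n :=
  forall n' w', ((w' < w) || (w' == w) && (n' < n))%N -> X n' w' = 0.

Lemma vanish_below_qshift q lam X w n : vanish_below X w n -> vanish_below (qshift q lam X) w n.
Proof. by move=> X0 n' w' h; rewrite /qshift X0 ?mulr0. Qed.

Lemma coef_mul_lead0 (D Y : bps) w n m c :
  vanish_below D w n -> lead0 Y m c -> (D * Y) (n + m)%N w = D n w * c.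
Proof.
move=> D0 [Y0 <-]; have {}Y0 k : (k < m)%N -> Y k 0%N = 0 := Y0 k.
have term0 (i j : nat) : (i <= n + m)%N -> (j <= w)%N -> ~~ ((i == n) && (j == w)) ->
    D i j * Y (n + m - i)%N (w - j)%N = 0.
  move=> hi hj nij; have [ij|] := boolP ((j < w) || (j == w) && (i < n))%N.
    by rewrite D0 ?mul0r.
  move=> h; have wj : (w - j)%N = 0%N by move: hj h; lia.
  by rewrite wj Y0 ?mulr0 //; move: hi hj nij h; lia.
have hn : (n < (n + m).+1)%N by lia.
have hw : (w < w.+1)%N by [].
rewrite bps_mulE (bigD1 (Ordinal hn)) //= (bigD1 (Ordinal hw)) //= addKn subnn.
rewrite !big1 ?addr0 // => [i ni|j wj].
- rewrite big1 // => j _; apply: term0; [exact: ltn_ord i | exact: ltn_ord j |].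
  by apply: contra ni => /andP[/eqP ni _]; apply/eqP/val_inj.
- rewrite -[in Y _ _](addKn n m); apply: term0; [exact: leq_addr | exact: ltn_ord j |].
  by rewrite eqxx /=; apply: contra wj => /eqP wj; apply/eqP/val_inj.
Qed.

End LeadingTerms.

(* [lead0_of X H] proves [H : lead0 X n c] with computed n and c, recursing
   through sums and products down to monomials and to atoms whose [lead0] is
   in the context. A monomial [monom c k k] with k > 0 has no B-free part; it
   gets order 10, larger than every order compared below. *)
Ltac lead0_of X H :=
  lazymatch X with
  | ?Y * ?Z =>
      let H1 := fresh "H" in let H2 := fresh "H" in lead0_of Y H1; lead0_of Z H2;
      lazymatch type of H1 with lead0 _ ?n1 _ => lazymatch type of H2 with lead0 _ ?n2 _ =>
        let n := eval vm_compute in (n1 + n2)%N in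
        pose proof (lead0M H1 H2 (erefl n)) as H; clear H1 H2 end end
  | ?Y + ?Z =>
      let H1 := fresh "H" in let H2 := fresh "H" in lead0_of Y H1; lead0_of Z H2;
      lazymatch type of H1 with lead0 _ ?n1 _ => lazymatch type of H2 with lead0 _ ?n2 _ =>
        lazymatch eval vm_compute in (n1 < n2)%N with
        | true => pose proof (lead0D_lt H1 H2 (erefl true)) as H
        | false => lazymatch eval vm_compute in (n2 < n1)%N with
          | true => pose proof (lead0D_gt H1 H2 (erefl true)) as H
          | false => pose proof (lead0D_eq H1 H2) as H end end; clear H1 H2 end end
  | - ?Y => let H1 := fresh "H" in lead0_of Y H1; pose proof (lead0N H1) as H; clear H1
  | monom ?c 0 0 => pose proof (lead0_const c) as H
  | monom ?c ?k ?k => pose proof (@lead0_monom_diag _ c k 10 (erefl true)) as H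
  | _ => lazymatch goal with H0 : lead0 X _ _ |- _ => pose proof H0 as H end
  end.

Lemma PA1_first_difference (R : comNzRingType) (f g sf f2 g2 sf2 d e sd T2 qT2 c5 c6 c7 c8 one x1
    x2 x3 x4 : R) :
  f = f2 + d -> g = g2 + e -> sf = sf2 + sd ->
  (((g * f - T2) * ((g * sf - qT2) * ((g - c5) * ((g - c6) * ((g - c7) * (g - c8)))))) - ((g * f -
      one) * ((g * sf - one) * ((g - x1) * ((g - x2) * ((g - x3) * (g - x4))))))) - (((g2 * f2 -
      T2) * ((g2 * sf2 - qT2) * ((g2 - c5) * ((g2 - c6) * ((g2 - c7) * (g2 - c8)))))) - ((g2 * f2
      - one) * ((g2 * sf2 - one) * ((g2 - x1) * ((g2 - x2) * ((g2 - x3) * (g2 - x4))))))) =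
  d * ((g * ((g2 * sf2 - qT2) * ((g2 - c5) * ((g2 - c6) * ((g2 - c7) * (g2 - c8)))))) - (g * ((g2
      * sf2 - one) * ((g2 - x1) * ((g2 - x2) * ((g2 - x3) * (g2 - x4))))))) + sd * (((g * f - T2)
      * (g * ((g2 - c5) * ((g2 - c6) * ((g2 - c7) * (g2 - c8)))))) - ((g * f - one) * (g * ((g2 -
      x1) * ((g2 - x2) * ((g2 - x3) * (g2 - x4))))))) + e * (((f2 * ((g2 * sf2 - qT2) * ((g2 - c5)
      * ((g2 - c6) * ((g2 - c7) * (g2 - c8)))))) + ((g * f - T2) * (sf2 * ((g2 - c5) * ((g2 - c6)
      * ((g2 - c7) * (g2 - c8)))))) + ((g * f - T2) * ((g * sf - qT2) * ((g2 - c6) * ((g2 - c7) *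
      (g2 - c8))))) + ((g * f - T2) * ((g * sf - qT2) * ((g - c5) * ((g2 - c7) * (g2 - c8))))) +
      ((g * f - T2) * ((g * sf - qT2) * ((g - c5) * ((g - c6) * (g2 - c8))))) + ((g * f - T2) *
      ((g * sf - qT2) * ((g - c5) * ((g - c6) * (g - c7)))))) - ((f2 * ((g2 * sf2 - one) * ((g2 -
      x1) * ((g2 - x2) * ((g2 - x3) * (g2 - x4)))))) + ((g * f - one) * (sf2 * ((g2 - x1) * ((g2 -
      x2) * ((g2 - x3) * (g2 - x4)))))) + ((g * f - one) * ((g * sf - one) * ((g2 - x2) * ((g2 -
      x3) * (g2 - x4))))) + ((g * f - one) * ((g * sf - one) * ((g - x1) * ((g2 - x3) * (g2 -
      x4))))) + ((g * f - one) * ((g * sf - one) * ((g - x1) * ((g - x2) * (g2 - x4))))) + ((g * f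
      - one) * ((g * sf - one) * ((g - x1) * ((g - x2) * (g - x3))))))).
Proof. by move=> -> -> ->; ring. Qed.

Lemma PA1_second_difference (R : comNzRingType) (g sf sg g2 sf2 sg2 e sd se qT2 q2T2 k5 k6 k7 k8
    one z1 z2 z3 z4 : R) :
  g = g2 + e -> sf = sf2 + sd -> sg = sg2 + se ->
  (((g * sf - qT2) * ((sg * sf - q2T2) * ((sf - k5) * ((sf - k6) * ((sf - k7) * (sf - k8)))))) -
      ((g * sf - one) * ((sg * sf - one) * ((sf - z1) * ((sf - z2) * ((sf - z3) * (sf - z4)))))))
      - (((g2 * sf2 - qT2) * ((sg2 * sf2 - q2T2) * ((sf2 - k5) * ((sf2 - k6) * ((sf2 - k7) * (sf2
      - k8)))))) - ((g2 * sf2 - one) * ((sg2 * sf2 - one) * ((sf2 - z1) * ((sf2 - z2) * ((sf2 -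
      z3) * (sf2 - z4))))))) =
  sd * (((g * ((sg2 * sf2 - q2T2) * ((sf2 - k5) * ((sf2 - k6) * ((sf2 - k7) * (sf2 - k8)))))) +
      ((g * sf - qT2) * (sg * ((sf2 - k5) * ((sf2 - k6) * ((sf2 - k7) * (sf2 - k8)))))) + ((g * sf
      - qT2) * ((sg * sf - q2T2) * ((sf2 - k6) * ((sf2 - k7) * (sf2 - k8))))) + ((g * sf - qT2) *
      ((sg * sf - q2T2) * ((sf - k5) * ((sf2 - k7) * (sf2 - k8))))) + ((g * sf - qT2) * ((sg * sf
      - q2T2) * ((sf - k5) * ((sf - k6) * (sf2 - k8))))) + ((g * sf - qT2) * ((sg * sf - q2T2) *
      ((sf - k5) * ((sf - k6) * (sf - k7)))))) - ((g * ((sg2 * sf2 - one) * ((sf2 - z1) * ((sf2 -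
      z2) * ((sf2 - z3) * (sf2 - z4)))))) + ((g * sf - one) * (sg * ((sf2 - z1) * ((sf2 - z2) *
      ((sf2 - z3) * (sf2 - z4)))))) + ((g * sf - one) * ((sg * sf - one) * ((sf2 - z2) * ((sf2 -
      z3) * (sf2 - z4))))) + ((g * sf - one) * ((sg * sf - one) * ((sf - z1) * ((sf2 - z3) * (sf2
      - z4))))) + ((g * sf - one) * ((sg * sf - one) * ((sf - z1) * ((sf - z2) * (sf2 - z4))))) +
      ((g * sf - one) * ((sg * sf - one) * ((sf - z1) * ((sf - z2) * (sf - z3))))))) + e * ((sf2 *
      ((sg2 * sf2 - q2T2) * ((sf2 - k5) * ((sf2 - k6) * ((sf2 - k7) * (sf2 - k8)))))) - (sf2 *
      ((sg2 * sf2 - one) * ((sf2 - z1) * ((sf2 - z2) * ((sf2 - z3) * (sf2 - z4))))))) + se * (((g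
      * sf - qT2) * (sf2 * ((sf2 - k5) * ((sf2 - k6) * ((sf2 - k7) * (sf2 - k8)))))) - ((g * sf -
      one) * (sf2 * ((sf2 - z1) * ((sf2 - z2) * ((sf2 - z3) * (sf2 - z4))))))).
Proof. by move=> -> -> ->; ring. Qed.

(* q^n lam^(n - w) is the multiplier of [qshift] on A^n B^w; the coefficient of
   A^n B^w in a solution is determined by the earlier ones unless it equals the
   multiplier q lam of the leading monomial A. *)
Definition nonresonant (K : fieldType) (q lam : K) :=
  forall n w, (0 < n)%N -> ~~ ((n == 1%N) && (w == 0%N)) -> q ^+ n * lam ^ (n%:Z - w%:Z) != q * lam.

Section Uniqueness.
Variable K : fieldType.
Local Notation bps := (fps (fps K)).
Variables (L : K) (b : 'I_8 -> K).
Hypothesis L_neq0 : L != 0.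
Hypothesis b_neq0 : forall i, b i != 0.
Local Notation q := (qpar b).
Local Notation lam := (lampar L b).
Local Notation B := (fun k : nat => b (inord k)).
Hypothesis qlam_nonresonant : nonresonant q lam.

Definition PA1_sol (f g : bps) :=
  PA1_first q B f g (qshift q lam f) /\ PA1_second q B g (qshift q lam f) (qshift q lam g).

Definition initial_terms (f g : bps) :=
  [/\ forall w, f 0%N w = 0, forall w, g 0%N w = 0, f 1%N 0%N = 1 & g 1%N 0%N = L].

Lemma lead0_atom (f : bps) c : (forall w, f 0%N w = 0) -> f 1%N 0%N = c -> lead0 f 1 c.
Proof. by move=> f0 f1; split=> [k|//]; rewrite ltnS leqn0 => /eqP ->; exact: f0. Qed.

Lemma initial_lead0 f g : initial_terms f g ->
  [/\ lead0 f 1 1, lead0 g 1 L, lead0 (qshift q lam f) 1 (q * lam)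
    & lead0 (qshift q lam g) 1 (q * lam * L)].
Proof.
case=> f0 g0 f1 g1; have lf := lead0_atom f0 f1; have lg := lead0_atom g0 g1.
by split=> //; [rewrite -[q * lam]mulr1 | ]; rewrite -[q]expr1 -[lam]expr1; apply: lead0_qshift.
Qed.

Local Notation S := (B 4%N * B 5%N * B 6%N * B 7%N).

Lemma qlam_S : q * lam * S = L ^+ 2.
Proof. by rewrite /qpar /lampar; field; rewrite !b_neq0. Qed.

Section NextCoefficient.
Variables (f g f2 g2 : bps) (n w : nat).
Hypotheses (sol : PA1_sol f g) (sol2 : PA1_sol f2 g2).
Hypotheses (init : initial_terms f g) (init2 : initial_terms f2 g2).
Hypotheses (hd : vanish_below (f - f2) w n) (he : vanish_below (g - g2) w n).
Local Notation x := ((f - f2) n w).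
Local Notation y := ((g - g2) n w).
Local Notation chi := (q ^+ n * lam ^ (n%:Z - w%:Z)).

Lemma PA1_first_linearized : S * (q * lam + chi) * x = 2 * L * y.
Proof.
case: sol sol2 => [e1 _] [e1' _].
have [lf lg lsf _] := initial_lead0 init; have [lf2 lg2 lsf2 _] := initial_lead0 init2.
have := @PA1_first_difference _ f g (qshift q lam f) f2 g2 (qshift q lam f2) (f - f2) (g - g2)
   (qshift q lam (f - f2))
   (monom 1 2 2) (monom q 2 2) (monom (B 4%N) 0 0) (monom (B 5%N) 0 0) (monom (B 6%N) 0 0)
   (monom (B 7%N) 0 0) (monom 1 0 0) (monom (B 0%N) 1 1) (monom (B 1%N) 1 1)
   (monom (B 2%N) 1 1) (monom (B 3%N) 1 1).
rewrite e1 e1' !subrr qshiftB.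
move=> /(_ (esym (subrKC _ _)) (esym (subrKC _ _)) (esym (subrKC _ _))) T.
lazymatch type of T with _ = _ * ?Y1 + _ * ?Y2 + _ * ?Y3 =>
  lead0_of Y1 hY1; lead0_of Y2 hY2; lead0_of Y3 hY3 end.
have hsd := vanish_below_qshift q lam hd; rewrite qshiftB in hsd.
have /esym C := congr1 (fun X : bps => X (n + 3)%N w) T.
rewrite !fps_addE (coef_mul_lead0 hd hY1) (coef_mul_lead0 hsd hY2) (coef_mul_lead0 he hY3) in C.
rewrite -qshiftB /qshift fps_zeroE in C.
have : L ^+ 2 * (S * (q * lam + chi) * x - 2 * L * y) = 0.
  by rewrite -[RHS]C; move: chi => chi; rewrite /qpar /lampar; field; rewrite !b_neq0.
by move/eqP; rewrite mulf_eq0 expf_eq0 (negbTE L_neq0) /= subr_eq0 => /eqP.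
Qed.

Lemma PA1_second_linearized : (q * lam + chi) * y = 2 * L * chi * x.
Proof.
case: sol sol2 => [_ e2] [_ e2'].
have [lf lg lsf lsg] := initial_lead0 init.
have [lf2 lg2 lsf2 lsg2] := initial_lead0 init2.
have := @PA1_second_difference _ g (qshift q lam f) (qshift q lam g) g2 (qshift q lam f2)
   (qshift q lam g2) (g - g2) (qshift q lam (f - f2)) (qshift q lam (g - g2))
   (monom q 2 2) (monom (q ^+ 2) 2 2) (monom (B 4%N)^-1 0 0) (monom (B 5%N)^-1 0 0)
   (monom (B 6%N)^-1 0 0) (monom (B 7%N)^-1 0 0) (monom 1 0 0) (monom ((B 0%N)^-1 * q) 1 1)
   (monom ((B 1%N)^-1 * q) 1 1) (monom ((B 2%N)^-1 * q) 1 1) (monom ((B 3%N)^-1 * q) 1 1).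
rewrite e2 e2' !subrr !qshiftB.
move=> /(_ (esym (subrKC _ _)) (esym (subrKC _ _)) (esym (subrKC _ _))) T.
lazymatch type of T with _ = _ * ?Y1 + _ * ?Y2 + _ * ?Y3 =>
  lead0_of Y1 hY1; lead0_of Y2 hY2; lead0_of Y3 hY3 end.
have hsd := vanish_below_qshift q lam hd; rewrite qshiftB in hsd.
have hse := vanish_below_qshift q lam he; rewrite qshiftB in hse.
have /esym C := congr1 (fun X : bps => X (n + 3)%N w) T.
rewrite !fps_addE (coef_mul_lead0 hsd hY1) (coef_mul_lead0 he hY2) (coef_mul_lead0 hse hY3) in C.
rewrite -!qshiftB /qshift fps_zeroE in C.
have : L * (q * lam) ^+ 2 / S * ((q * lam + chi) * y - 2 * L * chi * x) = 0.
  by rewrite -[RHS]C; move: chi => chi; rewrite /qpar /lampar; field; rewrite !b_neq0.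
move/eqP; rewrite mulf_eq0 subr_eq0 => /orP[|/eqP //].
rewrite !(mulf_eq0, expf_eq0, invr_eq0, negbTE L_neq0, negbTE (qpar_neq0 b_neq0)).
by rewrite !(negbTE (lampar_neq0 L_neq0 b_neq0), negbTE (b_neq0 _)).
Qed.

Lemma PA1_next_coef : (0 < n)%N -> ~~ ((n == 1%N) && (w == 0%N)) -> x = 0 /\ y = 0.
Proof.
move=> n0 nw; have chi_ne := qlam_nonresonant n0 nw.
have E1 := PA1_first_linearized; have E2 := PA1_second_linearized.
have S_neq0 : S != 0 by rewrite !(mulf_eq0, negbTE (b_neq0 _)).
have nz : S * (q * lam - chi) ^+ 2 != 0 by rewrite mulf_neq0 // expf_neq0 // subr_eq0 eq_sym.
(* the linearized system has determinant S (q lam - chi)^2, since q lam S = L^2 *)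
have ex : S * (q * lam - chi) ^+ 2 * x =
    (q * lam + chi) * (S * (q * lam + chi) * x - 2 * L * y) +
    2 * L * ((q * lam + chi) * y - 2 * L * chi * x) +
    4 * chi * x * (L ^+ 2 - q * lam * S) by ring.
have ey : S * (q * lam - chi) ^+ 2 * y =
    S * (q * lam + chi) * ((q * lam + chi) * y - 2 * L * chi * x) +
    2 * L * chi * (S * (q * lam + chi) * x - 2 * L * y) +
    4 * chi * y * (L ^+ 2 - q * lam * S) by ring.
rewrite E1 E2 qlam_S !subrr !mulr0 !addr0 in ex ey.
by split; apply: (mulfI nz); rewrite mulr0.
Qed.

End NextCoefficient.

Lemma PA1_sol_unique f g f2 g2 :
  PA1_sol f g -> PA1_sol f2 g2 -> initial_terms f g -> initial_terms f2 g2 -> f = f2 /\ g = g2.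
Proof.
move=> sol sol2 init init2.
suff H w n : (f - f2) n w = 0 /\ (g - g2) n w = 0.
  by split; apply/eqP; rewrite -subr_eq0; apply/eqP/funext=> n; apply/funext=> w; case: (H w n).
elim/ltn_ind: w n => w IHw; elim/ltn_ind => n IHn.
have [hd he] : vanish_below (f - f2) w n /\ vanish_below (g - g2) w n.
  by split=> n' w' /orP[/IHw/(_ n') [] | /andP[/eqP-> /IHn []]].
case: init init2 => [f0 g0 f1 g1] [f20 g20 f21 g21].
case: n {IHn} hd he => [|n] hd he.
  by rewrite !(fps_addE, fps_oppE) f0 g0 f20 g20 oppr0 addr0.
have [/andP[/eqP[->] /eqP->]|nw] := boolP ((n.+1 == 1%N) && (w == 0%N)).
  by rewrite !(fps_addE, fps_oppE) f1 g1 f21 g21 !subrr.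
exact: PA1_next_coef.
Qed.

End Uniqueness.

Section DualInverse.
Variable K : fieldType.
Local Notation bps := (fps (fps K)).

Lemma bps_invertible (u : bps) (c : K) : u 0%N 0%N * c = 1 -> exists v, u * v = 1.
Proof. by move=> /fps_invertible[c' /fps_invertible]. Qed.

Lemma varA_mul_inv_initial (u v : bps) (a : K) : a != 0 -> u * v = 1 -> u 0%N 0%N = a ->
  (forall w, (varA * v) 0%N w = 0) /\ (varA * v) 1%N 0%N = a^-1.
Proof.
move=> a0 uv u00; split=> [w|]; rewrite varA_mulE //.
have := congr1 (fun X : bps => X 0%N 0%N) uv; rewrite bps_mulE !big_ord1 u00 => av.
have {}av : a * v 0%N 0%N = 1 := av.
by rewrite -[v _ _]mul1r -(mulVf a0) -mulrA av mulr1.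
Qed.

Lemma smul_sinv_tser (F F' : ser K) (u v : bps) :
  bps_of_ser F = varA * v -> bswap (bps_of_ser F') = varB * u -> u * v = 1 ->
  smul F (sinv F') = tser K.
Proof.
move=> hF hF' uv; apply: bps_of_ser_inj; [exact: supp_smul | exact: supp_smon |].
rewrite bps_of_smul bps_of_sinv hF hF' /tser bps_of_smon monom_diag bconst1 mul1r expr1.
by rewrite mulrACA [v * u]mulrC uv mulr1.
Qed.

Variables (L : K) (b : 'I_8 -> K).
Hypothesis L_neq0 : L != 0.
Hypothesis b_neq0 : forall i, b i != 0.

Lemma f0plus_PA1_sol (F G : ser K) : is_f0plus L b F G ->
  PA1_sol L b (bps_of_ser F) (bps_of_ser G) /\ initial_terms L (bps_of_ser F) (bps_of_ser G).
Proof.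
move=> [[F0 [_ [G0 [_ /qPA1_bps[e1 e2]]]]] [F11 G11]].
by split=> //; split=> [w|w||]; [exact: F0 | exact: G0 | exact: F11 | exact: G11].
Qed.

Lemma dual_f0plus_PA1_sol (F' G' : ser K) : is_f0plus L^-1 (bdual b) F' G' ->
  exists u v u' v' : bps,
  [/\ bswap (bps_of_ser F') = varB * u, bswap (bps_of_ser G') = varB * u', u * v = 1, u' * v' = 1
    & PA1_sol L b (varA * v) (varA * v') /\ initial_terms L (varA * v) (varA * v')].
Proof.
move=> [[F0 [_ [G0 [_ /qPA1_bps[e1 e2]]]]] [F11 G11]].
rewrite (qpar_bdual b_neq0) (lampar_bdual L_neq0 b_neq0) in e1 e2.
have q0 := qpar_neq0 b_neq0; have lam0 := lampar_neq0 L_neq0 b_neq0.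
pose u := fun n w => bswap (bps_of_ser F') n w.+1.
pose u' := fun n w => bswap (bps_of_ser G') n w.+1.
have hF : bswap (bps_of_ser F') = varB * u by apply: varB_divides => n; exact: F0.
have hG : bswap (bps_of_ser G') = varB * u' by apply: varB_divides => n; exact: G0.
move: (PA1_first_bswap e1) (PA1_second_bswap e2); rewrite !bswap_qshift // hF hG => d1 d2.
have u00 : u 0%N 0%N = 1 := F11.
have u'00 : u' 0%N 0%N = L^-1 := G11.
have [v uv] := bps_invertible (c := 1) (etrans (mulr1 _) u00).
have [v' uv'] := bps_invertible (c := L) (etrans (congr1 (fun x => x * L) u'00) (mulVf L_neq0)).
exists u, v, u', v'; split=> //; split.
  by split; [apply: PA1_first_of_dual d1 | apply: PA1_second_of_dual d2].
have [f0 f1] := varA_mul_inv_initial (oner_neq0 _) uv u00.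
have [g0 g1] := varA_mul_inv_initial (invr_neq0 L_neq0) uv' u'00.
by split=> //; rewrite ?f1 ?g1 ?invr1 ?invrK.
Qed.

Hypothesis qlam_nonresonant : nonresonant (qpar b) (lampar L b).

Theorem f0plus_dual_inverse (F G F' G' : ser K) :
  is_f0plus L b F G -> is_f0plus L^-1 (bdual b) F' G' ->
  smul F (sinv F') = tser K /\ smul G (sinv G') = tser K.
Proof.
move=> /f0plus_PA1_sol[sol init].
move=> /dual_f0plus_PA1_sol[u [v [u' [v' [hF' hG' uv uv' [sol' init']]]]]].
have [hF hG] := PA1_sol_unique L_neq0 b_neq0 qlam_nonresonant sol sol' init init'.
by split; [apply: smul_sinv_tser hF hF' uv | apply: smul_sinv_tser hG hG' uv'].
Qed.

End DualInverse.

Local Notation tofrac := (@FracField.tofrac _).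

Lemma polyC_mulXn_inj (R : idomainType) (a b : R) m k : a != 0 -> b != 0 ->
  a%:P * 'X^m = b%:P * 'X^k -> m = k /\ a = b.
Proof.
rewrite !mul_polyC => a0 b0 E.
have := congr1 (fun p : {poly R} => size p) E; rewrite !size_scale // !size_polyXn => -[mk].
split=> //; have := congr1 (fun p : {poly R} => p`_m) E.
by rewrite !coefZ !coefXn mk eqxx !mulr1.
Qed.

Lemma resonance_nonneg_cross (F : fieldType) (P S X : F) n m : P != 0 -> S != 0 ->
  (P / S) ^+ n * (X ^+ 2 / P) ^+ m = (P / S) * (X ^+ 2 / P) ->
  P ^+ n * (X ^+ 2) ^+ m * (S * P) = P * X ^+ 2 * (S ^+ n * P ^+ m).
Proof.
move=> P0 S0; rewrite !expr_div_n => E.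
have Pm0 : P ^+ m != 0 by rewrite expf_neq0.
have Sn0 : S ^+ n != 0 by rewrite expf_neq0.
have := congr1 (fun z => z * (S ^+ n * P ^+ m * (S * P))) E.
rewrite (_ : P ^+ n / S ^+ n * ((X ^+ 2) ^+ m / P ^+ m) * (S ^+ n * P ^+ m * (S * P)) =
             P ^+ n * (X ^+ 2) ^+ m * (S * P)); last by field; rewrite Pm0 Sn0.
by move=> ->; field; rewrite P0 S0.
Qed.

Lemma resonance_neg_cross (F : fieldType) (P S X : F) n k : P != 0 -> S != 0 -> X != 0 ->
  (P / S) ^+ n * ((X ^+ 2 / P) ^+ k)^-1 = (P / S) * (X ^+ 2 / P) ->
  P ^+ n * P ^+ k * S = (X ^+ 2) ^+ k.+1 * S ^+ n.
Proof.
move=> P0 S0 X0; rewrite !expr_div_n => E.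
have Pk0 : P ^+ k != 0 by rewrite expf_neq0.
have Sn0 : S ^+ n != 0 by rewrite expf_neq0.
have Xk0 : (X ^+ 2) ^+ k != 0 by rewrite !expf_neq0.
have := congr1 (fun z => z * (S ^+ n * (X ^+ 2) ^+ k * S)) E.
rewrite (_ : P ^+ n / S ^+ n * ((X ^+ 2) ^+ k / P ^+ k)^-1 * (S ^+ n * (X ^+ 2) ^+ k * S) =
             P ^+ n * P ^+ k * S); last by field; rewrite Pk0 Sn0 Xk0.
by move=> ->; rewrite [(X ^+ 2) ^+ k.+1]exprS; field; rewrite P0 S0.
Qed.

Section GenericParameters.
Variable R : idomainType.
Variables (e s : R).
Hypotheses (e_neq0 : e != 0) (s_neq0 : s != 0).
Local Notation c := (e%:P * 'X : {poly R}).
Local Notation p := (c%:P : {poly {poly R}}).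
Local Notation s' := ((s%:P)%:P : {poly {poly R}}).
Local Notation P := (tofrac p).
Local Notation S := (tofrac s').
Local Notation Lam := (tofrac ('X : {poly {poly R}})).

Let c_neq0 : c != 0. Proof. by rewrite mulf_neq0 ?polyC_eq0 ?polyX_eq0. Qed.
Let s_neq0' : s%:P != 0 :> {poly R}. Proof. by rewrite polyC_eq0. Qed.
Let P_neq0 : P != 0. Proof. by rewrite tofrac_eq0 polyC_eq0. Qed.
Let S_neq0 : S != 0. Proof. by rewrite tofrac_eq0 polyC_eq0. Qed.

Lemma no_resonance_nonneg n m :
  (P / S) ^+ n * (Lam ^+ 2 / P) ^+ m = (P / S) * (Lam ^+ 2 / P) -> n = 1%N /\ m = 1%N.
Proof.
move=> /(resonance_nonneg_cross P_neq0 S_neq0) /eqP.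
rewrite -!tofracXn -!tofracM tofrac_eq => /eqP E.
have {}E : (c ^+ n * (s%:P * c))%:P * 'X^(2 * m) = (c * (s%:P ^+ n * c ^+ m))%:P * 'X^2.
  rewrite !polyCM !polyC_exp exprM.
  by transitivity (p ^+ n * ('X ^+ 2) ^+ m * (s' * p)); [ring | rewrite E; ring].
have [m1 {}E] := polyC_mulXn_inj (mulf_neq0 (expf_neq0 _ c_neq0) (mulf_neq0 s_neq0' c_neq0))
  (mulf_neq0 c_neq0 (mulf_neq0 (expf_neq0 _ s_neq0') (expf_neq0 _ c_neq0))) E.
have {}m1 : m = 1%N by lia.
have E2 : (e ^+ n * s)%:P * 'X^n = (s ^+ n * e)%:P * 'X^1.
  apply: (mulIf c_neq0); rewrite !polyCM !polyC_exp.
  transitivity (c ^+ n * (s%:P * c)); first by rewrite exprMn; ring.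
  by rewrite E m1 expr1; ring.
by have [n1 _] := polyC_mulXn_inj (mulf_neq0 (expf_neq0 _ e_neq0) s_neq0)
  (mulf_neq0 (expf_neq0 _ s_neq0) e_neq0) E2.
Qed.

Lemma no_resonance_neg n k :
  (P / S) ^+ n * ((Lam ^+ 2 / P) ^+ k.+1)^-1 != (P / S) * (Lam ^+ 2 / P).
Proof.
have Lam0 : Lam != 0 by rewrite tofrac_eq0 polyX_eq0.
apply/negP => /eqP /(resonance_neg_cross P_neq0 S_neq0 Lam0) /eqP.
rewrite -!tofracXn -!tofracM tofrac_eq => /eqP E.
have {}E : (c ^+ n * c ^+ k.+1 * s%:P)%:P * 'X^0 = ((s%:P) ^+ n)%:P * 'X^(2 * k.+2).
  by rewrite expr0 mulr1 !polyCM !polyC_exp E exprM mulrC.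
have [] := polyC_mulXn_inj (mulf_neq0 (mulf_neq0 (expf_neq0 _ c_neq0) (expf_neq0 _ c_neq0)) s_neq0')
  (expf_neq0 _ s_neq0') E.
by [].
Qed.

Lemma nonresonant_generic : nonresonant (P / S) (Lam ^+ 2 / P).
Proof.
move=> n w n0 nw; apply/eqP.
case: (leqP w n) => hw.
  rewrite (_ : n%:Z - w%:Z = (n - w)%N); last by lia.
  by move/no_resonance_nonneg => [n1 m1]; move: nw; rewrite n1; move: hw m1; rewrite n1; lia.
rewrite (_ : n%:Z - w%:Z = - (w - n)%N%:Z) ?exprnN; last by lia.
have [k ->] : exists k, (w - n)%N = k.+1 by exists (w - n).-1; lia.
exact/eqP/no_resonance_neg.
Qed.

End GenericParameters.

Lemma mvar_neq0 n k : (k < n)%N -> mvar n k != 0.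
Proof.
elim: n k => [//|n IH] [|k] /= kn; first by rewrite polyX_eq0.
by rewrite polyC_eq0 IH.
Qed.

Lemma Lgen_neq0 : Lgen != 0.
Proof. by rewrite tofrac_eq0 mvar_neq0. Qed.

Lemma bgen_neq0 i : bgen i != 0.
Proof. by rewrite tofrac_eq0 mvar_neq0 //; exact: (ltn_ord i). Qed.

Lemma bgenE k : (k < 8)%N -> bgen (inord k) = tofracK (mvar 8 k)%:P.
Proof. by move=> k8; rewrite /bgen inordK. Qed.

(* As polynomials in b_1 over the remaining variables, b_1 b_2 b_3 b_4 has
   degree one and b_5 b_6 b_7 b_8 degree zero. *)
Lemma bgen_low :
  bgen (inord 0) * bgen (inord 1) * bgen (inord 2) * bgen (inord 3) =
  tofracK ((mvar 7 0 * mvar 7 1 * mvar 7 2)%:P * 'X)%:P.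
Proof.
rewrite !bgenE // /tofracK -!tofracM -!polyCM.
by congr (FracField.tofrac _%:P); rewrite [RHS]mulrC !polyCM !mulrA.
Qed.

Lemma bgen_high :
  bgen (inord 4) * bgen (inord 5) * bgen (inord 6) * bgen (inord 7) =
  tofracK (mvar 7 3 * mvar 7 4 * mvar 7 5 * mvar 7 6)%:P%:P.
Proof. by rewrite !bgenE // /tofracK -!tofracM -!polyCM. Qed.

Lemma qpar_bgen : qpar bgen =
  tofracK ((mvar 7 0 * mvar 7 1 * mvar 7 2)%:P * 'X)%:P /
  tofracK (mvar 7 3 * mvar 7 4 * mvar 7 5 * mvar 7 6)%:P%:P.
Proof. by rewrite /qpar; congr (_ / _); [exact: bgen_low | exact: bgen_high]. Qed.

Lemma lampar_bgen :
  lampar Lgen bgen = Lgen ^+ 2 / tofracK ((mvar 7 0 * mvar 7 1 * mvar 7 2)%:P * 'X)%:P.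
Proof. by rewrite /lampar; congr (_ / _); exact: bgen_low. Qed.

Lemma nonresonant_gen : nonresonant (qpar bgen) (lampar Lgen bgen).
Proof.
have v0 k : (k < 7)%N -> mvar 7 k != 0 := @mvar_neq0 7 k.
have e0 := mulf_neq0 (mulf_neq0 (v0 0%N isT) (v0 1%N isT)) (v0 2%N isT).
have s0 := mulf_neq0 (mulf_neq0 (mulf_neq0 (v0 3%N isT) (v0 4%N isT)) (v0 5%N isT)) (v0 6%N isT).
by rewrite qpar_bgen lampar_bgen; exact: nonresonant_generic e0 s0.
Qed.

Theorem mainTheorem6 (F G F' G' : ser Kgen) :
  is_f0plus Lgen bgen F G ->
  is_f0plus Lgen^-1 (bdual bgen) F' G' ->
  smul F (sinv F') = tser Kgen /\ smul G (sinv G') = tser Kgen.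
Proof. exact: (f0plus_dual_inverse Lgen_neq0 bgen_neq0 nonresonant_gen). Qed.
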